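(* Let $p\ge1$, $X=\{0,1,\dots,p\}$, and for $i\in\{1,\dots,p\}$ let $e_i$ be the transformation of $X^\ast$ defined recursively by $e_i(0w)=i\,e_i(w)$, $e_i(iw)=0w$, $e_i(jw)=jw$ for $j\notin\{0,i\}$. For $n\ge1$ let $A_n=\sum_{i=1}^p\bigl(M^{(n)}_i+(M^{(n)}_i)^{-1}\bigr)$ with $M^{(n)}_i$ the permutation matrix of $e_i$ on $X^n$, let $P_n(\lambda)=\det(\lambda I-A_n)$, $f_p(\lambda)=\lambda^2-2(p-1)\lambda-2p$, and $f_p^{\circ i}$ its $i$-fold iterate. Then for each $n\ge1$ $$P_n(\lambda)=(\lambda-2p)\prod_{i=0}^{n-1}\bigl(f_p^{\circ i}(\lambda)+2\bigr)\prod_{i=0}^{n-1}\bigl(f_p^{\circ i}(\lambda)-2(p-1)\bigr)^{(p-1)(p+1)^{n-i-1}}.$$ In particular the spectrum of $A_n$ (as a multiset) is the union of $\{2p\}$, the sets $f_p^{-i}(-2)$ for $i=0,\dots,n-1$, and the sets $f_p^{-i}(2(p-1))$ for $i=0,\dots,n-1$, each element of the latter counted with multiplicity $(p-1)(p+1)^{n-i-1}$.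
   Context: $f_p^{-i}(x)$ denotes the multiset of roots of $f_p^{\circ i}(\lambda)-x$. $A_n$ is the adjacency matrix of the $n$-th Schreier graph of the star automaton group $\mathcal G_{S_p}=\langle e_1,\dots,e_p\rangle$. *)

From HB Require Import structures.
From mathcomp Require Import all_boot all_order all_algebra.
Set Implicit Arguments. Unset Strict Implicit. Unset Printing Implicit Defensive.
Import Order.TTheory GRing.Theory Num.Theory.
Local Open Scope ring_scope.

Fixpoint star_gen (p : nat) (i : 'I_p.+1) (w : seq 'I_p.+1) : seq 'I_p.+1 :=
  match w with
  | [::] => [::]
  | x :: w' =>
      if x == ord0 then i :: star_gen i w'
      else if x == i then ord0 :: w'
      else x :: w'
  end.

Definition level (p n : nat) := {: n.-tuple 'I_p.+1}.

Definition perm_mx_e (p n : nat) (i : 'I_p.+1) : 'M[int]_(#|level p n|) :=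
  \matrix_(a, b)
    ((star_gen i (val (enum_val a : n.-tuple 'I_p.+1))
       == val (enum_val b : n.-tuple 'I_p.+1)) : nat)%:R.

Definition adjA (p n : nat) : 'M[int]_(#|level p n|) :=
  \sum_(i < p.+1 | i != ord0) (perm_mx_e n i + invmx (perm_mx_e n i)).

Definition fp (p : nat) : {poly int} :=
  'X^2 - ((2 * (p - 1))%N)%:R *: 'X - ((2 * p)%N)%:R%:P.

Definition fp_iter (p i : nat) : {poly int} := iter i (fun q => fp p \Po q) 'X.

From HB Require Import structures.
From mathcomp Require Import all_boot all_order all_algebra.
From mathcomp Require Import fingroup perm ring zify.
Import Order.TTheory GRing.Theory Num.Theory.
Set Implicit Arguments. Unset Strict Implicit. Unset Printing Implicit Defensive.
Local Open Scope ring_scope.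

(* Split X^(n+1) into the words 0w and the words (i+1)w with i < p and w in X^n.
   No generator joins two words 0w, 0w'; on (i+1)w every e_k with k <> i+1 acts
   trivially, so that block of A_(n+1) is 2(p-1) I; and 0w is joined to (i+1)w'
   with weight B(w, (i, w')) = [e_(i+1) w = w'] + [w = w'].  The Schur complement
   of the block (lambda - 2(p-1)) I in lambda I - A_(n+1) is
   lambda (lambda - 2(p-1)) I - B B^T = f_p(lambda) I - A_n, since B B^T = 2p I + A_n.
   Hence P_(n+1)(lambda) = (lambda - 2(p-1))^((p-1)(p+1)^n) P_n(f_p(lambda)), and
   iterating from P_0(lambda) = lambda - 2p gives the product formula. *)

Section FinTypeMatrices.
Variable R : comPzRingType.

Definition fun_mx (I J : finType) (F : I -> J -> R) : 'M[R]_(#|I|, #|J|) :=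
  \matrix_(i, j) F (enum_val i) (enum_val j).

Lemma fun_mx_scalar (T : finType) (a : R) :
  fun_mx (fun x y : T => a *+ (x == y)) = a%:M.
Proof. by apply/matrixP => i j; rewrite !mxE (inj_eq enum_val_inj). Qed.

Lemma det_mxsub_inj m (M : 'M[R]_m) (h : 'I_m -> 'I_m) : injective h ->
  \det (mxsub h h M) = \det M.
Proof.
move=> h_inj; pose s := perm h_inj.
have -> : mxsub h h M = row_perm s (col_perm s M).
  by apply/matrixP => i j; rewrite !mxE !permE.
rewrite row_permE col_permE !det_mulmx mulrCA -det_mulmx -perm_mxM mulgV.
by rewrite perm_mx1 det1 mulr1.
Qed.

Lemma det_fun_mx_ord (T : finType) m (h : 'I_m -> T) (F : T -> T -> R) :
  bijective h -> \det (\matrix_(i, j) F (h i) (h j)) = \det (fun_mx F).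
Proof.
move=> h_bij; have m_card : m = #|T| by rewrite -(bij_eq_card h_bij) card_ord.
subst m; rewrite -(@det_mxsub_inj _ (fun_mx F) (fun i => enum_rank (h i))).
  by congr (\det _); apply/matrixP => i j; rewrite !mxE !enum_rankK.
by move=> i j /enum_rank_inj /(bij_inj h_bij).
Qed.

Lemma det_fun_mx_bij (T T' : finType) (phi : T' -> T) (F : T -> T -> R) :
  bijective phi -> \det (fun_mx (fun x y => F (phi x) (phi y))) = \det (fun_mx F).
Proof.
move=> [g phiK gK].
rewrite -(@det_fun_mx_ord _ _ (fun i : 'I_#|T'| => phi (enum_val i))).
  by congr (\det _); apply/matrixP => i j; rewrite !mxE.
by exists (fun x => enum_rank (g x)) => [i|x]; rewrite ?phiK ?enum_valK ?enum_rankK ?gK.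
Qed.

Lemma det_fun_mx_sum (I J : finType) (F : I + J -> I + J -> R) :
  \det (fun_mx F) =
  \det (block_mx (fun_mx (fun x y => F (inl x) (inl y)))
                 (fun_mx (fun x y => F (inl x) (inr y)))
                 (fun_mx (fun x y => F (inr x) (inl y)))
                 (fun_mx (fun x y => F (inr x) (inr y)))).
Proof.
pose h (k : 'I_(#|I| + #|J|)) : I + J :=
  match split k with inl a => inl (enum_val a) | inr b => inr (enum_val b) end.
have h_bij : bijective h.
  exists (fun u => unsplit (match u with
                            | inl x => inl (enum_rank x) | inr y => inr (enum_rank y) end)).
    by move=> k; rewrite /h -[k]splitK; case: (split k) => a; rewrite unsplitK enum_valK.
  by case=> x; rewrite /h unsplitK enum_rankK.
rewrite -(det_fun_mx_ord F h_bij); congr (\det _).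
apply/matrixP => i j; rewrite -(splitK i) -(splitK j) /h.
case: (split i) => a; case: (split j) => b;
  by rewrite ?block_mxEul ?block_mxEur ?block_mxEdl ?block_mxEdr !mxE !unsplitK.
Qed.

Lemma det_block_scalar_schur m k (a : R) (D : 'M[R]_m) (B : 'M[R]_(m, k))
    (C : 'M[R]_(k, m)) :
  a ^+ m * \det (block_mx D B C a%:M) = a ^+ k * \det (a *: D - B *m C).
Proof.
have := congr1 determinant (mulmx_block a%:M (- B) 0 1%:M D B C a%:M).
rewrite !mul_scalar_mx !mul0mx ?mul1mx !add0r mul_mx_scalar mulNmx !scale1r.
rewrite scalerN subrr det_mulmx det_ublock det_lblock !det_scalar ?det1 ?expr1n ?mulr1 => ->.
by rewrite mulrC.
Qed.

Lemma sum_delta (T : finType) (x y : T) :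
  \sum_v ((x == v)%:R * (y == v)%:R : R) = (x == y)%:R.
Proof.
rewrite (bigD1 x) //= eqxx mul1r big1 ?addr0 ?(eq_sym y) // => v vx.
by rewrite eq_sym (negbTE vx) mul0r.
Qed.

End FinTypeMatrices.

Section StarGenerators.
Variable p : nat.
Local Notation X := 'I_p.+1.

Fixpoint star_gen_inv (i : X) (w : seq X) : seq X :=
  match w with
  | [::] => [::]
  | x :: w' => if x == i then ord0 :: star_gen_inv i w'
               else if x == ord0 then i :: w' else x :: w'
  end.

Lemma star_genK (i : X) : i != ord0 -> cancel (star_gen i) (star_gen_inv i).
Proof.
move=> i_neq0; elim=> [|x w IHw] //=.
have [->|x_neq0] := eqVneq x ord0; first by rewrite /= eqxx IHw.
have [->|x_neqi] := eqVneq x i; first by rewrite /= eq_sym (negbTE i_neq0).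
by rewrite /= (negbTE x_neqi) (negbTE x_neq0).
Qed.

Lemma size_star_gen (i : X) w : size (star_gen i w) = size w.
Proof. by elim: w => [|x w IHw] //=; case: ifP => _ /=; [rewrite IHw | case: ifP]. Qed.

Lemma star_tuple_proof n (i : X) (u : n.-tuple X) : size (star_gen i u) == n.
Proof. by rewrite size_star_gen size_tuple. Qed.
Definition star_tuple n (i : X) (u : n.-tuple X) : n.-tuple X :=
  Tuple (star_tuple_proof i u).

Lemma star_tuple_inj n (i : X) : i != ord0 -> injective (@star_tuple n i).
Proof. by move=> i_neq0 u v /(congr1 val) /(can_inj (star_genK i_neq0)) /val_inj. Qed.

Definition star_adj n (u v : n.-tuple X) : int :=
  \sum_(i < p.+1 | i != ord0) ((star_tuple i u == v)%:R + (star_tuple i v == u)%:R).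

Lemma star_adjC n (u v : n.-tuple X) : star_adj u v = star_adj v u.
Proof. by apply: eq_bigr => i _; rewrite addrC. Qed.

Lemma invmx_perm_mx_e n (i : X) : i != ord0 -> invmx (perm_mx_e n i) = (perm_mx_e n i)^T.
Proof.
move=> i_neq0.
have e_inj : injective (fun a : 'I_#|level p n| => enum_rank (star_tuple i (enum_val a))).
  by move=> a b /enum_rank_inj /(star_tuple_inj i_neq0) /enum_val_inj.
have -> : perm_mx_e n i = perm_mx (perm e_inj).
  apply/matrixP => a b; rewrite !mxE permE.
  by rewrite -(inj_eq enum_val_inj) enum_rankK.
rewrite tr_perm_mx -[invmx _]mulmx1 -perm_mx1 -(mulgV (perm e_inj)) perm_mxM.
by rewrite mulmxA mulVmx ?unitmx_perm ?mul1mx.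
Qed.

Lemma adjA_fun_mx n : adjA p n = fun_mx (@star_adj n).
Proof.
apply/matrixP => a b; rewrite summxE !mxE.
by apply: eq_bigr => i i_neq0; rewrite invmx_perm_mx_e // !mxE.
Qed.

End StarGenerators.

Section FirstLetter.
Variable p : nat.
Local Notation X := 'I_p.+1.

Lemma big_neq_ord0 (R : nmodType) (F : X -> R) :
  \sum_(k < p.+1 | k != ord0) F k = \sum_(k < p) F (lift ord0 k).
Proof. by rewrite big_mkcond big_ord_recl eqxx /= add0r. Qed.

(* [inl w] stands for the word [0 w], [inr (i, w)] for [(i + 1) w]. *)
Definition cons_word n (u : n.-tuple X + 'I_p * n.-tuple X) : n.+1.-tuple X :=
  match u with
  | inl w => [tuple of ord0 :: w]
  | inr (i, w) => [tuple of lift ord0 i :: w]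
  end.

Lemma cons_word_bij n : bijective (@cons_word n).
Proof.
pose uncons (t : n.+1.-tuple X) :=
  if unlift ord0 (thead t) is Some i then inr (i, [tuple of behead t])
  else inl [tuple of behead t].
exists uncons => [[w|[i w]]|t]; rewrite /uncons.
- by rewrite theadE unlift_none; congr inl; apply: val_inj.
- by rewrite theadE liftK; congr (inr (_, _)); apply: val_inj.
by rewrite [in RHS](tuple_eta t); case: unliftP => [i|] -> /=; apply: val_inj.
Qed.

Lemma cons_tuple_eq n (x y : X) (u v : n.-tuple X) :
  ([tuple of x :: u] == [tuple of y :: v]) = (x == y) && (u == v).
Proof. by rewrite -val_eqE /= eqseq_cons. Qed.

Lemma lift0_eq (i j : 'I_p) : (lift ord0 i == lift ord0 j :> X) = (i == j).
Proof. exact: (inj_eq (@lift_inj _ ord0)). Qed.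

Lemma star_tuple_eq n (i : X) (u v : n.-tuple X) :
  (star_tuple i u == v) = (star_gen i u == v :> seq X).
Proof. by []. Qed.

Lemma star_adj_cons0 n (w w' : n.-tuple X) :
  star_adj [tuple of ord0 :: w] [tuple of ord0 :: w'] = 0.
Proof.
rewrite /star_adj big1 // => k k_neq0.
by rewrite !star_tuple_eq /= !eqseq_cons (negbTE k_neq0).
Qed.

Definition star_link n (w : n.-tuple X) (j : 'I_p * n.-tuple X) : int :=
  (star_tuple (lift ord0 j.1) w == j.2)%:R + (w == j.2)%:R.

Lemma star_adj_cons0_lift n (w : n.-tuple X) (i : 'I_p) (w' : n.-tuple X) :
  star_adj [tuple of ord0 :: w] [tuple of lift ord0 i :: w'] = star_link w (i, w').
Proof.
rewrite /star_adj big_neq_ord0 (bigD1 i) //= big1 ?addr0 => [|k k_neqi].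
  rewrite !star_tuple_eq /= eqxx !eqseq_cons eqxx /star_link /=.
  by rewrite star_tuple_eq [w == w']eq_sym.
by rewrite !star_tuple_eq /= !eqseq_cons !lift0_eq (eq_sym i) (negbTE k_neqi).
Qed.

Lemma star_gen_cons_lift (k i : 'I_p) (w : seq X) :
  star_gen (lift ord0 k) (lift ord0 i :: w) = (if i == k then ord0 else lift ord0 i) :: w.
Proof. by rewrite /= lift0_eq; case: ifP. Qed.

Lemma star_adj_lift n (i j : 'I_p) (w w' : n.-tuple X) :
  star_adj [tuple of lift ord0 i :: w] [tuple of lift ord0 j :: w'] =
  (2 * (p - 1))%N%:R *+ ((i == j) && (w == w')).
Proof.
have lift_neq0 (k : 'I_p) : (ord0 == lift ord0 k :> X) = false by apply/negbTE/neq_lift.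
rewrite /star_adj big_neq_ord0.
have [/andP[/eqP<- /eqP<-]|neq] := boolP ((i == j) && (w == w')).
  rewrite (bigD1 i) //= !star_tuple_eq star_gen_cons_lift eqxx eqseq_cons lift_neq0 add0r.
  rewrite (eq_bigr (fun _ => 2%:R)) => [|k k_neqi]; last first.
    by rewrite star_tuple_eq star_gen_cons_lift [i == k]eq_sym (negbTE k_neqi) eqxx.
  by rewrite sumr_const cardC1 card_ord subn1 natrM mulr_natr.
rewrite big1 // => k _; rewrite !star_tuple_eq !star_gen_cons_lift !eqseq_cons.
case: ifP; case: ifP; rewrite ?lift_neq0 //= !lift0_eq.
all: by rewrite ?[j == i]eq_sym ?[tval w' == _]eq_sym (negbTE neq).
Qed.

Lemma star_adj_nil : @star_adj p 0 [tuple] [tuple] = (2 * p)%N%:R.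
Proof.
rewrite /star_adj big_neq_ord0 (eq_bigr (fun _ => 2%:R)) // sumr_const card_ord.
by rewrite natrM mulr_natr.
Qed.

Lemma sum_star_link n (w w' : n.-tuple X) :
  \sum_j star_link w j * star_link w' j = (2 * p)%N%:R *+ (w == w') + star_adj w w'.
Proof.
rewrite -(pair_big predT predT (fun i v => star_link w (i, v) * star_link w' (i, v))) /=.
have sum_i (i : 'I_p) : \sum_v star_link w (i, v) * star_link w' (i, v) =
    ((star_tuple (lift ord0 i) w == w')%:R + (star_tuple (lift ord0 i) w' == w)%:R)
    + (w == w')%:R *+ 2.
  rewrite /star_link /=; under eq_bigr do rewrite mulrDl !mulrDr.
  rewrite !big_split /= !sum_delta (inj_eq (star_tuple_inj _)) ?[w == star_tuple _ _]eq_sym //.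
  by rewrite mulr2n; ring.
rewrite (eq_bigr _ (fun i _ => sum_i i)) big_split /= sumr_const card_ord addrC.
rewrite /star_adj big_neq_ord0; congr (_ + _).
by case: (w == w'); rewrite ?mul0rn -?mulrnA ?mul1n ?muln1 ?muln0.
Qed.

Definition star_char n (u v : n.-tuple X) : {poly int} :=
  'X *+ (u == v) - (star_adj u v)%:P.

Definition star_charpoly n := \det (fun_mx (@star_char n)).

Lemma char_poly_adjA n : char_poly (adjA p n) = star_charpoly n.
Proof.
rewrite /char_poly adjA_fun_mx; congr (\det _).
by apply/matrixP => a b; rewrite !mxE /star_char (inj_eq enum_val_inj).
Qed.

Lemma star_char_comp_fp n (w w' : n.-tuple X) :
  star_char w w' \Po fp p =
  ('X - (2 * (p - 1))%N%:R%:P) * ('X *+ (w == w'))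
  - (\sum_j star_link w j * star_link w' j)%:P.
Proof.
rewrite sum_star_link /star_char rmorphB /= comp_polyC.
have [<-|neq] := eqVneq w w'; rewrite ?eqxx ?(negbTE neq) ?mulr0 ?comp_poly0 ?add0r //.
by rewrite !mulr1n comp_polyX polyCD /fp -mul_polyC; ring.
Qed.

Lemma star_charpoly_schur n :
  ('X - (2 * (p - 1))%N%:R%:P) ^+ #|{: n.-tuple X}| * star_charpoly n.+1 =
  ('X - (2 * (p - 1))%N%:R%:P) ^+ #|{: 'I_p * n.-tuple X}| * (star_charpoly n \Po fp p).
Proof.
rewrite /star_charpoly -(det_fun_mx_bij (@star_char n.+1) (@cons_word_bij n)).
rewrite det_fun_mx_sum.
have -> : fun_mx (fun x y => star_char (@cons_word n (inl x)) (cons_word (inl y))) = 'X%:M.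
  rewrite -fun_mx_scalar; apply/matrixP => a b; rewrite !mxE.
  by rewrite /star_char star_adj_cons0 subr0 cons_tuple_eq eqxx.
have -> : fun_mx (fun x y => star_char (@cons_word n (inr x)) (cons_word (inr y))) =
          ('X - (2 * (p - 1))%N%:R%:P)%:M.
  rewrite -fun_mx_scalar; apply/matrixP => a b; rewrite !mxE.
  case: (enum_val a) => i w; case: (enum_val b) => j w'.
  rewrite /star_char /= star_adj_lift cons_tuple_eq lift0_eq xpair_eqE.
  by case: (_ && _); rewrite ?subr0.
have -> : fun_mx (fun x y => star_char (@cons_word n (inl x)) (cons_word (inr y))) =
          fun_mx (fun w j => - (star_link w j)%:P).
  apply/matrixP => a b; rewrite !mxE; case: (enum_val b) => j w'.
  by rewrite /star_char /= star_adj_cons0_lift sub0r.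
have -> : fun_mx (fun x y => star_char (@cons_word n (inr x)) (cons_word (inl y))) =
          fun_mx (fun j w => - (star_link w j)%:P).
  apply/matrixP => a b; rewrite !mxE; case: (enum_val a) => j w'.
  by rewrite /star_char /= star_adjC star_adj_cons0_lift sub0r.
rewrite det_block_scalar_schur; congr (_ * _).
rewrite -det_map_mx; congr (\det _); apply/matrixP => a b.
rewrite !mxE /= star_char_comp_fp (inj_eq enum_val_inj); congr (_ - _).
under eq_bigr do rewrite !mxE mulrNN -polyCM.
by rewrite (big_enum_val (fun j => _ * _)) rmorph_sum.
Qed.

End FirstLetter.

Section ClosedForm.
Variable p : nat.
Hypothesis p_gt0 : (0 < p)%N.

Lemma star_charpoly0 : star_charpoly p 0 = 'X - (2 * p)%N%:R%:P.
Proof.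
rewrite /star_charpoly -(@det_fun_mx_ord _ _ 1%N (fun _ => [tuple])); last first.
  by exists (fun _ => ord0) => [i|t]; rewrite ?(ord1 i) ?(tuple0 t).
by rewrite det_mx11 mxE /star_char eqxx star_adj_nil.
Qed.

Lemma star_charpolyS n :
  star_charpoly p n.+1 =
  ('X - (2 * (p - 1))%N%:R%:P) ^+ ((p - 1) * (p + 1) ^ n) * (star_charpoly p n \Po fp p).
Proof.
have := star_charpoly_schur p n; rewrite card_prod !card_tuple !card_ord.
have -> : (p * p.+1 ^ n = p.+1 ^ n + (p - 1) * (p + 1) ^ n)%N.
  by rewrite addn1; move: (p.+1 ^ n)%N => m; nia.
rewrite exprD -mulrA => /mulfI -> //.
by rewrite expf_neq0 // polyXsubC_eq0.
Qed.

Lemma fp_iterSr i : fp_iter p i \Po fp p = fp_iter p i.+1.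
Proof.
elim: i => [|i IHi]; first by rewrite /fp_iter /= comp_polyX comp_polyXr.
by move: IHi; rewrite /fp_iter !iterS -comp_polyA => ->.
Qed.

Lemma comp_fp_X_sub2p :
  ('X - (2 * p)%N%:R%:P) \Po fp p = ('X - (2 * p)%N%:R%:P) * ('X + 2%:P).
Proof.
rewrite comp_polyB comp_polyX comp_polyC /fp -mul_polyC.
have -> : (2 * (p - 1))%N%:R%:P = (2 * p)%N%:R%:P - 2%:P :> {poly int}.
  by rewrite -polyCB mulnBr muln1 natrB //; lia.
ring.
Qed.

Lemma star_charpoly_closed n :
  star_charpoly p n =
    ('X - ((2 * p)%N)%:R%:P)
    * \prod_(i < n) (fp_iter p i + 2%:P)
    * \prod_(i < n) (fp_iter p i - ((2 * (p - 1))%N)%:R%:P)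
                      ^+ ((p - 1) * (p + 1) ^ (n - i - 1))%N.
Proof.
elim: n => [|n IHn]; first by rewrite star_charpoly0 !big_ord0 !mulr1.
rewrite star_charpolyS IHn !comp_polyM !rmorph_prod /= comp_fp_X_sub2p.
under eq_bigr do rewrite rmorphD /= comp_polyC fp_iterSr.
under [X in _ * (_ * _ * X) = _]eq_bigr do rewrite rmorphXn rmorphB /= comp_polyC fp_iterSr.
rewrite !big_ord_recl /= subn0 subn1 /=.
under [X in _ = _ * (_ * X) * _]eq_bigr => i _ do rewrite add0n.
under [X in _ = _ * (_ * X)]eq_bigr => i _ do rewrite add0n /bump /= add1n subSS.
rewrite !subn1 /=.
(* [ring] needs the products and the symbolic exponent abstracted as atoms. *)
move: (\prod_(i < n) _) => P1; move: (\prod_(i < n) _) => P2.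
by move: (p.-1 * (p + 1) ^ n)%N => e; ring.
Qed.

End ClosedForm.

Theorem theorem3p9 (p n : nat) (hp : (1 <= p)%N) (hn : (1 <= n)%N) :
  char_poly (adjA p n) =
    ('X - ((2 * p)%N)%:R%:P)
    * \prod_(i < n) (fp_iter p i + 2%:P)
    * \prod_(i < n) (fp_iter p i - ((2 * (p - 1))%N)%:R%:P)
                      ^+ ((p - 1) * (p + 1) ^ (n - i - 1))%N.
Proof.
by rewrite char_poly_adjA (star_charpoly_closed hp).
Qed.
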